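(* Let $\kappa$ be an uncountable regular cardinal, let $\mathcal{I}$ be a $\kappa$-complete proper ideal on $\kappa$ containing every bounded subset of $\kappa$, and suppose $\mathcal{I}$ has a basis of size $\kappa$. Let $\nu\in\{2,\kappa\}$. Then the $\mathcal{I}$-Borel hierarchy on ${}^{\kappa}\nu$ is increasing: for all ordinals $1\le\alpha<\beta$, $\boldsymbol{\Sigma}^0_\alpha({}^{\kappa}\nu,\tau_{\mathcal{I}})\subseteq\boldsymbol{\Sigma}^0_\beta({}^{\kappa}\nu,\tau_{\mathcal{I}})$.
   Context: A basis for $\mathcal{I}$ is a family $\mathcal{B}\subseteq\mathcal{I}$ such that every member of $\mathcal{I}$ is contained in some member of $\mathcal{B}$. ${}^{\kappa}\nu$ is the set of functions $\kappa\to\nu$; $\tau_{\mathcal{I}}$ is the topology generated by the sets $\mathbf{N}_f=\{x:f\subseteq x\}$ for $f\colon D\to\nu$ with $D\in\mathcal{I}$. $\boldsymbol{\Sigma}^0_1$ = $\tau_{\mathcal{I}}$-open sets, $\boldsymbol{\Pi}^0_1$ = $\tau_{\mathcal{I}}$-closed sets; for $\alpha>1$, $\boldsymbol{\Sigma}^0_\alpha$ is the family of unions $\bigcup_{\gamma<\kappa}A_\gamma$ with $A_\gamma\in\bigcup_{1\le\beta<\alpha}\boldsymbol{\Pi}^0_\beta$, and $\boldsymbol{\Pi}^0_\alpha$ the complements of $\boldsymbol{\Sigma}^0_\alpha$ sets. *)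

Set Implicit Arguments.

Definition injective {A B : Type} (f : A -> B) := forall x y, f x = f y -> x = y.
Definition bijective_fun {A B : Type} (f : A -> B) :=
  injective f /\ (forall b, exists a, f a = b).

Definition is_wellorder {T : Type} (lt : T -> T -> Prop) :=
  well_founded lt /\ (forall x y z, lt x y -> lt y z -> lt x z) /\
  (forall x y, lt x y \/ x = y \/ lt y x).

Definition card_lt (J K : Type) :=
  (exists f : J -> K, injective f) /\ ~ (exists g : K -> J, injective g).

(* (K, lt) is (the order type of) an uncountable regular cardinal kappa:
   a well-order, every proper initial segment has smaller cardinality (so it is
   a cardinal), K does not inject into nat (uncountable), and every unbounded
   subset of K has cardinality kappa (regular). *)
Definition uncountable_regular_cardinal (K : Type) (lt : K -> K -> Prop) :=
  is_wellorder lt /\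
  (forall x, ~ exists f : K -> {y : K | lt y x}, injective f) /\
  ~ (exists f : K -> nat, injective f) /\
  (forall A : K -> Prop, (forall x, exists y, A y /\ lt x y) ->
      exists f : K -> {y : K | A y}, injective f).

Definition kappa_complete_proper_ideal (K : Type) (I : (K -> Prop) -> Prop) :=
  I (fun _ => False) /\
  (forall A B : K -> Prop, I A -> (forall x, B x -> A x) -> I B) /\
  (forall A B : K -> Prop, I A -> I B -> I (fun x => A x \/ B x)) /\
  (forall (J : Type) (F : J -> K -> Prop), card_lt J K ->
      (forall j, I (F j)) -> I (fun x => exists j, F j x)) /\
  ~ I (fun _ => True).

Definition contains_bounded (K : Type) (lt : K -> K -> Prop) (I : (K -> Prop) -> Prop) :=
  forall (A : K -> Prop) (x : K), (forall y, A y -> lt y x) -> I A.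

Definition has_basis_of_size_kappa (K : Type) (I : (K -> Prop) -> Prop) :=
  exists B : (K -> Prop) -> Prop,
    (forall A, B A -> I A) /\
    (forall A, I A -> exists C, B C /\ forall x, A x -> C x) /\
    (exists f : K -> {C : K -> Prop | B C}, bijective_fun f).

Inductive generated_open {X : Type} (S : (X -> Prop) -> Prop) : (X -> Prop) -> Prop :=
| go_sub : forall U, S U -> generated_open S U
| go_full : generated_open S (fun _ => True)
| go_inter : forall U W, generated_open S U -> generated_open S W ->
    generated_open S (fun x => U x /\ W x)
| go_union : forall F : (X -> Prop) -> Prop, (forall U, F U -> generated_open S U) ->
    generated_open S (fun x => exists U, F U /\ U x).

Definition N_sets (K V : Type) (I : (K -> Prop) -> Prop) : ((K -> V) -> Prop) -> Prop :=
  fun U => exists (D : K -> Prop) (f : {d : K | D d} -> V),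
    I D /\ U = (fun x => forall (d : K) (h : D d), x d = f (exist _ d h)).

Definition tauI_open (K V : Type) (I : (K -> Prop) -> Prop) : ((K -> V) -> Prop) -> Prop :=
  generated_open (@N_sets K V I).

(* The I-Borel hierarchy, indexed by a well-order (O, ltO): the element of O at
   position xi represents the ordinal level 1 + xi (so minimal elements are
   level 1). *)
Inductive Sigma0 (K V : Type) (I : (K -> Prop) -> Prop) (O : Type) (ltO : O -> O -> Prop)
  : O -> ((K -> V) -> Prop) -> Prop :=
| S_open : forall a A, (forall b, ~ ltO b a) -> @tauI_open K V I A -> @Sigma0 K V I O ltO a A
| S_union : forall a (F : K -> (K -> V) -> Prop),
    (exists b, ltO b a) ->
    (forall g, exists b, ltO b a /\ @Sigma0 K V I O ltO b (fun x => ~ F g x)) ->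
    @Sigma0 K V I O ltO a (fun x => exists g, F g x).

Definition Pi0 (K V : Type) (I : (K -> Prop) -> Prop) (O : Type) (ltO : O -> O -> Prop)
  (a : O) (B : (K -> V) -> Prop) : Prop := @Sigma0 K V I O ltO a (fun x => ~ B x).

Definition hierarchy_increasing (K V : Type) (I : (K -> Prop) -> Prop) : Prop :=
  forall (O : Type) (ltO : O -> O -> Prop), is_wellorder ltO ->
    forall (a b : O), ltO a b ->
    forall A : (K -> V) -> Prop, @Sigma0 K V I O ltO a A -> @Sigma0 K V I O ltO b A.

(* A tau_I-open set U contains, around each of its points x, a basic set of
   functions agreeing with x on some D in I, and D may be enlarged to a member
   C_i of the basis (i < kappa).  Hence U is the union over i < kappa of
   U_i = {x | every y agreeing with x on C_i lies in U}; membership in U_i only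
   depends on the restriction to C_i, so each U_i is clopen.  Thus open sets
   are kappa-unions of closed sets, i.e. Sigma^0_1 is contained in every higher
   level; for alpha > 1 the inclusion is immediate, since the pieces of a
   Sigma^0_alpha union are also of level below beta. *)
From Stdlib Require Import FunctionalExtensionality PropExtensionality.

Set Implicit Arguments.

Definition agree_on {K V : Type} (D : K -> Prop) (y x : K -> V) : Prop :=
  forall d, D d -> y d = x d.

Definition interior_on {K V : Type} (D : K -> Prop) (U : (K -> V) -> Prop)
  (x : K -> V) : Prop :=
  forall y, agree_on D y x -> U y.

Section OpenSets.

Variables (K V : Type) (I : (K -> Prop) -> Prop).

Lemma tauI_open_nbhd (I0 : I (fun _ => False))
  (IU : forall A B : K -> Prop, I A -> I B -> I (fun x => A x \/ B x))
  (U : (K -> V) -> Prop) :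
  tauI_open I U -> forall x, U x -> exists D, I D /\ interior_on D U x.
Proof.
  induction 1 as [U [D [f [ID ->]]] | | U W _ IHU _ IHW | F _ IHF].
  - intros x Ux. exists D. split; [exact ID|].
    intros y Hy d h. rewrite (Hy d h). apply Ux.
  - intros x _. exists (fun _ => False). split; [exact I0|]. intros y _. trivial.
  - intros x [Ux Wx].
    destruct (IHU x Ux) as [D1 [ID1 H1]], (IHW x Wx) as [D2 [ID2 H2]].
    exists (fun z => D1 z \/ D2 z). split; [auto|].
    intros y Hy. split; [apply H1 | apply H2]; intros d h; apply Hy; auto.
  - intros x [U0 [FU0 U0x]]. destruct (IHF U0 FU0 x U0x) as [D [ID HD]].
    exists D. split; [exact ID|]. intros y Hy. exists U0. auto.
Qed.

Lemma tauI_open_of_nbhd (W : (K -> V) -> Prop) :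
  (forall x, W x -> exists D, I D /\ interior_on D W x) -> tauI_open I W.
Proof.
  intros HW.
  set (Fam := fun U : (K -> V) -> Prop =>
    exists x D, I D /\ interior_on D W x /\ U = (fun y => agree_on D y x)).
  replace W with (fun z => exists U, Fam U /\ U z).
  - apply go_union. intros U [x [D [ID [_ ->]]]]. apply go_sub.
    exists D, (fun p => x (proj1_sig p)). split; [exact ID | reflexivity].
  - apply functional_extensionality; intro z; apply propositional_extensionality.
    split.
    + intros [U [[x [D [_ [HD ->]]]] Hz]]. exact (HD z Hz).
    + intros Wz. destruct (HW z Wz) as [D [ID HD]].
      exists ((fun y => agree_on D y z)). split; [exists z, D; auto | intros d _; reflexivity].
Qed.

Lemma tauI_open_interior_on (D : K -> Prop) (U : (K -> V) -> Prop) :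
  I D -> tauI_open I (interior_on D U).
Proof.
  intros ID. apply tauI_open_of_nbhd. intros x Hx. exists D. split; [exact ID|].
  intros y Hy z Hz. apply Hx. intros d h. rewrite (Hz d h). apply Hy, h.
Qed.

Lemma tauI_open_not_interior_on (D : K -> Prop) (U : (K -> V) -> Prop) :
  I D -> tauI_open I (fun x => ~ interior_on D U x).
Proof.
  intros ID. apply tauI_open_of_nbhd. intros x Hx. exists D. split; [exact ID|].
  intros y Hy Hint. apply Hx. intros z Hz. apply Hint.
  intros d h. rewrite (Hz d h). symmetry. apply Hy, h.
Qed.

Lemma tauI_open_union_clopen :
  kappa_complete_proper_ideal I -> has_basis_of_size_kappa I ->
  forall U : (K -> V) -> Prop, tauI_open I U ->
  exists Ui : K -> (K -> V) -> Prop,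
    U = (fun x => exists i, Ui i x) /\ forall i, tauI_open I (fun x => ~ Ui i x).
Proof.
  intros [I0 [_ [IU _]]] [B [BI [B_cofinal [C [_ C_onto]]]]] U HU.
  exists (fun i => interior_on (proj1_sig (C i)) U). split.
  - apply functional_extensionality; intro x; apply propositional_extensionality.
    split.
    + intros Ux. destruct (tauI_open_nbhd I0 IU HU x Ux) as [D [ID HD]].
      destruct (B_cofinal D ID) as [E [BE DE]].
      destruct (C_onto (exist _ E BE)) as [i Ci].
      exists i. intros y Hy. apply HD. intros d h. apply Hy.
      rewrite Ci. exact (DE d h).
    + intros [i Hi]. apply Hi. intros d _; reflexivity.
  - intros i. apply tauI_open_not_interior_on, BI, proj2_sig.
Qed.

End OpenSets.

Lemma Sigma0_open_above {K V : Type} {I : (K -> Prop) -> Prop}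
  {O : Type} {ltO : O -> O -> Prop} {a b : O} {A : (K -> V) -> Prop} :
  kappa_complete_proper_ideal I -> has_basis_of_size_kappa I ->
  (forall c, ~ ltO c a) -> ltO a b -> tauI_open I A -> Sigma0 I ltO b A.
Proof.
  intros HI HB amin ab HA.
  destruct (tauI_open_union_clopen HI HB HA) as [Ui [-> closed_Ui]].
  apply S_union; [exists a; exact ab|].
  intros i. exists a. split; [exact ab|]. apply S_open; auto.
Qed.

Lemma Sigma0_increasing (K V : Type) (I : (K -> Prop) -> Prop) :
  kappa_complete_proper_ideal I -> has_basis_of_size_kappa I ->
  @hierarchy_increasing K V I.
Proof.
  intros HI HB O ltO [_ [ltO_trans _]] a b ab A HA.
  destruct HA as [a A amin HA | a F _ HF].
  - exact (Sigma0_open_above HI HB amin ab HA).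
  - apply S_union; [exists a; exact ab|].
    intros g. destruct (HF g) as [c [ca Hc]]. exists c. split; [|exact Hc].
    exact (ltO_trans c a b ca ab).
Qed.

Theorem corollary4p5 (K : Type) (lt : K -> K -> Prop) (I : (K -> Prop) -> Prop) :
  uncountable_regular_cardinal lt ->
  kappa_complete_proper_ideal I ->
  contains_bounded lt I ->
  has_basis_of_size_kappa I ->
  @hierarchy_increasing K bool I /\ @hierarchy_increasing K K I.
Proof.
  intros _ HI _ HB. split; exact (Sigma0_increasing HI HB).
Qed.
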